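(* Fix an integer $k\ge0$. Then $n\mapsto p_S(n,n+k)$ is increasing on the integers $n\ge k$: for all integers $n_2>n_1\ge k$, $p_S(n_1,n_1+k)<p_S(n_2,n_2+k)$.
   Context: For integers $n,m$, $p_S(n,m)$ is the number of $(x_1,x_2,x_3,x_4)\in\mathbb{Z}_{\ge0}^4$ with $x_1+x_3+x_4=n$ and $x_2+x_3+2x_4=m$ (the number of vector partitions of $(n,m)$ with parts in $\{(1,0),(0,1),(1,1),(1,2)\}$). *)

From mathcomp Require Import all_boot.
Set Implicit Arguments. Unset Strict Implicit. Unset Printing Implicit Defensive.

(* Every solution has all coordinates <= n + m, so we count
   inside the finite box 'I_(n+m+1)^4 (no solutions are lost). *)
Definition pS (n m : nat) : nat :=
  #|[set x : 'I_(n + m).+1 * 'I_(n + m).+1 * 'I_(n + m).+1 * 'I_(n + m).+1 |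
      let: (x1, x2, x3, x4) := x in
      ((x1 + x3 + x4 == n) && (x2 + x3 + 2 * x4 == m))%N]|.

From mathcomp Require Import all_boot.
From mathcomp Require Import zify.

(* Adding the parts (1,0) and (0,1) maps the vector partitions of (n, m)
   injectively into those of (n+1, m+1).  The image consists of the partitions
   using both parts (1,0) and (0,1), so it misses the partition of (n+1, m+1)
   into copies of (1,1) and (1,2) alone, which exists exactly when
   n <= m <= 2n+1.  On the diagonal line m = n + k with n >= k this holds, so
   p_S strictly increases at every step. *)

Definition ord_shift {N} (M s : nat) (a : 'I_N.+1) : 'I_M.+1 := inord (a + s).

Lemma ord_shiftK N M s (a : 'I_N.+1) : N + s <= M -> val (ord_shift M s a) = a + s.
Proof. by move=> le_NsM; rewrite /= inordK //; have := ltn_ord a; lia. Qed.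

Section PartitionShift.

Variables n m : nat.

Local Notation N := (n + m).
Local Notation M := (n.+1 + m.+1).
Local Notation box B := ('I_B.+1 * 'I_B.+1 * 'I_B.+1 * 'I_B.+1)%type.

Let N1_le_M : N + 1 <= M. Proof. lia. Qed.
Let N0_le_M : N + 0 <= M. Proof. lia. Qed.

Definition add_unit_parts (x : box N) : box M :=
  let: (x1, x2, x3, x4) := x in
  (ord_shift M 1 x1, ord_shift M 1 x2, ord_shift M 0 x3, ord_shift M 0 x4).

Lemma add_unit_parts_inj : injective add_unit_parts.
Proof.
move=> [[[a b] c] d] [[[a' b'] c'] d'] /= [].
move=> /(congr1 val); rewrite !ord_shiftK // => ea.
move=> /(congr1 val); rewrite !ord_shiftK // => eb.
move=> /(congr1 val); rewrite !ord_shiftK // => ec.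
move=> /(congr1 val); rewrite !ord_shiftK // => ed.
by congr (_, _, _, _); apply/val_inj => /=; lia.
Qed.

Lemma pS_lt_succ : n <= m <= n.*2.+1 -> pS n m < pS n.+1 m.+1.
Proof.
move=> /andP[le_nm le_m2n].
rewrite /pS -(card_imset _ add_unit_parts_inj); apply: proper_card.
apply/properP; split.
  apply/subsetP => _ /imsetP[[[[a b] c] d] + ->].
  rewrite !inE /= !ord_shiftK // => /andP[/eqP e1 /eqP e2].
  by apply/andP; split; apply/eqP; lia.
exists (inord 0, inord 0, inord (n.+1 - (m - n)), inord (m - n)).
  by rewrite inE /= !inordK; lia.
apply/imsetP => -[[[[a b] c] e] _ [/(congr1 val)]].
by rewrite ord_shiftK //= inordK // addn1 => /eqP.
Qed.

End PartitionShift.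

Theorem lemmaA3 (k n1 n2 : nat) : k <= n1 -> n1 < n2 ->
  pS n1 (n1 + k) < pS n2 (n2 + k).
Proof.
move=> le_k_n1 lt_n12.
have pS_diag_lt_succ : {in [pred n | k <= n], forall n,
    n.+1 \in [pred n | k <= n] -> pS n (n + k) < pS n.+1 (n.+1 + k)}.
  move=> n; rewrite inE => le_kn _; rewrite addSn; apply: pS_lt_succ.
  by apply/andP; split; lia.
apply: (homo_ltn_in ltn_trans _ pS_diag_lt_succ) => //=; last by rewrite inE; lia.
by move=> i j; rewrite !inE => le_ki _ l /andP[lt_il _]; rewrite inE; lia.
Qed.
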